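(* Let $U\subseteq\mathbb{R}^n$ be an open set with finite Lebesgue measure and let $f:U\times\mathbb{R}^m\to\mathbb{R}$ be a normal integrand bounded from below. Let $(u_k)$ be a sequence uniformly bounded in $L^\infty(U;\mathbb{R}^m)$ generating a Young measure $\nu=\{\nu_x\}_{x\in U}$. Then $$\liminf_{k\to\infty}\operatorname*{ess\,sup}_{x\in U}f(x,u_k(x))\ge\operatorname*{ess\,sup}_{x\in U}\bar f(x),\qquad\bar f(x):=\nu_x\text{-}\operatorname*{ess\,sup}_{\xi\in\mathbb{R}^m}f(x,\xi).$$
   Context: A normal integrand is a $\mathcal{L}^n\otimes\mathcal{B}$-measurable $f:U\times\mathbb{R}^m\to\mathbb{R}$ with $f(x,\cdot)$ lower semicontinuous for a.e. $x$. A family $\{\nu_x\}_{x\in U}$ of Borel probability measures on $\mathbb{R}^m$ is the Young measure generated by a bounded sequence $(u_k)$ in $L^\infty$ if it is weakly* measurable, the $\nu_x$ are supported in a common compact set, and for every Carathéodory $g$ with $(g(\cdot,u_k))$ bounded and equi-integrable in $L^1$, $g(\cdot,u_k)\rightharpoonup\int g(\cdot,\xi)\,d\nu_{(\cdot)}(\xi)$ weakly in $L^1$. $\nu_x\text{-}\operatorname{ess\,sup}$ denotes the essential supremum with respect to $\nu_x$. *)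

From HB Require Import structures.
From mathcomp Require Import all_boot all_order all_algebra.
From mathcomp Require Import all_classical all_reals all_analysis measurable_realfun.

Set Implicit Arguments.
Unset Strict Implicit.
Unset Printing Implicit Defensive.

Import Order.TTheory GRing.Theory Num.Theory.
Import numFieldNormedType.Exports.

Local Open Scope classical_set_scope.
Local Open Scope ring_scope.

(* R^n is modelled as [n.-tuple R], with the library's product
   sigma-algebra, i.e. the Borel sigma-algebra of R^n. *)

Section young.
Variable R : realType.

(** sup-norm closeness of two points of R^n (generates the Euclidean
    topology of R^n) *)
Definition tclose (n : nat) (x y : n.-tuple R) (e : R) : Prop :=
  forall i : 'I_n, `|tnth x i - tnth y i| < e.

Definition topen (n : nat) (U : set (n.-tuple R)) : Prop :=
  forall x, U x -> exists2 e : R, 0 < e & forall y, tclose x y e -> U y.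

Definition tcontinuous (m : nat) (F : m.-tuple R -> R) : Prop :=
  forall xi (e : R), 0 < e ->
    exists2 d : R, 0 < d & forall eta, tclose xi eta d -> `|F eta - F xi| < e.

Definition tlsc (m : nat) (F : m.-tuple R -> R) : Prop :=
  forall xi (a : R), a < F xi ->
    exists2 d : R, 0 < d & forall eta, tclose xi eta d -> a < F eta.

(** [mu] is the Lebesgue measure on (the Borel sets of) R^n: it gives
    every box its volume (this characterizes it uniquely). *)
Definition is_lebesgue (n : nat) (mu : {measure set (n.-tuple R) -> \bar R}) :=
  forall a b : n.-tuple R, (forall i, tnth a i <= tnth b i) ->
    mu [set x | forall i, tnth a i < tnth x i <= tnth b i] =
    (\prod_(i < n) (tnth b i - tnth a i))%:E.

Section with_mu.
Variables (n : nat) (mu : {measure set (n.-tuple R) -> \bar R}).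

(** Lebesgue measurable sets = completion of the Borel sets w.r.t. mu *)
Definition lmeasurable (A : set (n.-tuple R)) : Prop :=
  exists B N, [/\ measurable B, measurable N, mu N = 0%E &
                  (A `\` B) `|` (B `\` A) `<=` N].

Definition lmeas_fun d' (T' : measurableType d') (U : set (n.-tuple R))
    (h : n.-tuple R -> T') : Prop :=
  forall B, measurable B -> lmeasurable (U `&` h @^-1` B).

Definition ess_sup_on (U : set (n.-tuple R)) (F : n.-tuple R -> \bar R) : \bar R :=
  ereal_inf [set y | \forall x \ae mu, U x -> (F x <= y)%E].

Variable m : nat.

Definition LxB : set (set (n.-tuple R * m.-tuple R)) :=
  <<s [set C | exists A B, [/\ lmeasurable A, measurable B & C = A `*` B]] >>.

Variable U : set (n.-tuple R).

Definition normal_integrand (f : n.-tuple R -> m.-tuple R -> R) : Prop :=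
  (forall B : set R, measurable B -> LxB [set p | U p.1 /\ B (f p.1 p.2)]) /\
  (\forall x \ae mu, U x -> tlsc (f x)).

Definition caratheodory (g : n.-tuple R -> m.-tuple R -> R) : Prop :=
  (forall xi, lmeas_fun U (fun x => g x xi)) /\
  (\forall x \ae mu, U x -> tcontinuous (g x)).

Definition C0 (phi : m.-tuple R -> R) : Prop :=
  tcontinuous phi /\
  forall e : R, 0 < e -> exists r : R, forall xi,
    (exists i, r < `|tnth xi i|) -> `|phi xi| < e.

Definition Linf_bounded (u : nat -> n.-tuple R -> m.-tuple R) : Prop :=
  (forall k, lmeas_fun U (u k)) /\
  exists C : R, forall k, \forall x \ae mu, U x -> forall i, `|tnth (u k x) i| <= C.

Definition L1_bounded (G : nat -> n.-tuple R -> R) : Prop :=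
  (forall k, lmeas_fun U (G k)) /\
  exists C : R, forall k, (\int[mu]_(x in U) `|G k x|%:E <= C%:E)%E.

Definition equi_integrable (G : nat -> n.-tuple R -> R) : Prop :=
  forall e : R, 0 < e -> exists2 d : R, 0 < d &
    forall E, measurable E -> E `<=` U -> (mu E < d%:E)%E ->
      forall k, (\int[mu]_(x in E) `|G k x|%:E < e%:E)%E.

Definition weak_L1_cvg (G : nat -> n.-tuple R -> R) (Ginf : n.-tuple R -> \bar R) :=
  lmeas_fun U Ginf /\ (\int[mu]_(x in U) `|Ginf x| < +oo)%E /\
  forall h : n.-tuple R -> R, lmeas_fun U h ->
    (exists C : R, \forall x \ae mu, U x -> `|h x| <= C) ->
    (fun k => \int[mu]_(x in U) ((G k x)%:E * (h x)%:E))%E @ \oo -->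
    (\int[mu]_(x in U) (Ginf x * (h x)%:E))%E.

Definition generates_young (u : nat -> n.-tuple R -> m.-tuple R)
    (nu : n.-tuple R -> probability (m.-tuple R) R) : Prop :=
  [/\ (forall phi, C0 phi -> lmeas_fun U (fun x => \int[nu x]_xi (phi xi)%:E)%E),
      (exists C : R, forall x, U x -> nu x [set xi | exists i, C < `|tnth xi i|] = 0%E) &
      (forall g, caratheodory g ->
        L1_bounded (fun k x => g x (u k x)) ->
        equi_integrable (fun k x => g x (u k x)) ->
        weak_L1_cvg (fun k x => g x (u k x)) (fun x => \int[nu x]_xi (g x xi)%:E)%E)].

End with_mu.

Definition nu_ess_sup (m : nat) (P : probability (m.-tuple R) R)
    (F : m.-tuple R -> R) : \bar R :=
  ereal_inf [set y | \forall xi \ae P, ((F xi)%:E <= y)%E].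

End young.

(* Fix t > liminf_k ess sup_U f(., u_k) and let J be the infinite set of those k
   with ess sup_U f(., u_k) < t.  The distance g(x, xi) from xi to
   {u_k(x) | k in J}, capped at 1, is a bounded Caratheodory integrand vanishing
   at (x, u_k(x)) for k in J, so testing the Young measure against g gives
   int_U int g(x, .) dnu_x dx = 0.  Hence for a.e. x, nu_x-almost every xi is a
   cluster point of (u_k(x))_{k in J}; there f(x, .) <= t, and the lower
   semicontinuity of f(x, .) yields f(x, xi) <= t, i.e. \bar f(x) <= t. *)

From HB Require Import structures.
From mathcomp Require Import all_boot all_order all_algebra.
From mathcomp Require Import all_classical all_reals all_analysis measurable_realfun.
From mathcomp Require Import lra.
Import Order.TTheory GRing.Theory Num.Theory.
Local Open Scope classical_set_scope.
Local Open Scope ring_scope.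
Set Implicit Arguments.
Unset Strict Implicit.
Unset Printing Implicit Defensive.

Lemma lee_fin_gt (R : realType) (x y : \bar R) :
  (forall t : R, (y < t%:E)%E -> (x <= t%:E)%E) -> (x <= y)%E.
Proof.
case: y => [l| |] H.
- by apply/lee_addgt0Pr => e e0; apply: H; rewrite lte_fin ltrDl.
- by rewrite leey.
- case: x H => [r| |] H //.
    by have := H (r - 1)%R (ltNyr _); rewrite lee_fin => ?; exfalso; lra.
  by have := H 0 (ltNyr _); rewrite leNgt ltry.
Qed.

Lemma limn_einf_lt_frequently (R : realType) (s : (\bar R)^nat) (t : \bar R) :
  (limn_einf s < t)%E -> forall N, exists2 k, (N <= k)%N & (s k < t)%E.
Proof.
move=> st N; have : (einfs s N < t)%E.
  apply: le_lt_trans st; rewrite limn_einf_lim.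
  rewrite (cvg_lim (@ereal_hausdorff R) (@cvg_einfs_sup R s)).
  by apply: ereal_sup_ubound; exists N.
by move=> /ereal_inf_lt [_ [k Nk <-] sk]; exists k.
Qed.

Lemma cvg_frequently_eq (R : realType) (v : (\bar R)^nat) (a l : \bar R) :
  (forall N, exists2 k, (N <= k)%N & v k = a) -> v @ \oo --> l -> l = a.
Proof.
move=> va vl; apply: (@ereal_hausdorff R) => A B lA aB.
have [N _ vA] := vl A lA; have [k Nk vka] := va N.
by exists a; split; [rewrite -vka; exact: vA | exact: nbhs_singleton].
Qed.

Section ge0_integral.
Context d (T : measurableType d) (R : realType) (mu : {measure set T -> \bar R}).
Local Open Scope ereal_scope.

(* Unlike [ge0_le_integral], no measurability is required: both sides are
   suprema of integrals of simple functions below the integrands. *)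
Lemma ge0_le_integral_patch D1 D2 (F1 F2 : T -> \bar R) :
  (forall x, D1 x -> 0 <= F1 x) -> (forall x, D2 x -> 0 <= F2 x) ->
  (forall x, (F1 \_ D1) x <= (F2 \_ D2) x) ->
  \int[mu]_(x in D1) F1 x <= \int[mu]_(x in D2) F2 x.
Proof.
move=> F10 F20 F12; rewrite !ge0_integralE//.
by apply: ereal_sup_le => _ [h hF <-]; exists h => //= x; exact: le_trans (hF x) (F12 x).
Qed.

Lemma ge0_integral_eq0_ae D (F : T -> \bar R) :
  (forall x, D x -> 0 <= F x) -> \int[mu]_(x in D) F x = 0 ->
  (forall c : R, (0 < c)%R -> exists B, [/\ measurable B,
       B `<=` D `&` [set x | c%:E < F x] &
       mu.-negligible (D `&` [set x | c%:E < F x] `\` B)]) ->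
  \forall x \ae mu, D x -> F x = 0.
Proof.
move=> F0 F_int0 inner.
have level0 c : (0 < c)%R -> \forall x \ae mu, D x -> F x <= c%:E.
  move=> c0; have [B [mB BD DBN]] := inner c c0.
  have muB : mu B = 0.
    apply/eqP; rewrite eq_le measure_ge0 andbT.
    rewrite -(@lee_pmul2l _ c%:E) ?lte_fin// mule0 -integral_cst// -F_int0.
    apply: ge0_le_integral_patch => [x _|//|x]; first by rewrite lee_fin ltW.
    rewrite /patch; case: ifPn => [/[1!inE] Bx|_].
      by have [Dx /ltW] := BD _ Bx; rewrite ifT ?inE.
    by case: ifPn => // /[1!inE] /F0.
  apply: negligibleS (negligibleU (proj2 (negligibleP _ mB) muB) DBN).
  move=> x /not_implyP[Dx /negP]; rewrite -ltNge => cF.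
  by have [Bx|nBx] := pselect (B x); [left|right].
have inv_gt0 j : (0 < j.+1%:R^-1 :> R)%R by rewrite invr_gt0.
apply: filterS (ae_foralln (fun j => level0 _ (inv_gt0 j))) => x Fj Dx.
apply/eqP; rewrite eq_le F0 // andbT; case E: (F x) (Fj 0%N Dx) => [r| |] //= _.
rewrite lee_fin; apply/ler_addgt0Pr => e e0; have [k] := ltr_add_invr e0.
by rewrite !add0r => /ltW; apply: le_trans; rewrite -lee_fin -E Fj.
Qed.

End ge0_integral.

Section completion.
Variables (R : realType) (n : nat) (mu : {measure set (n.-tuple R) -> \bar R}).

(* R^n with the mu-completed sigma-algebra; the measure is a (phantom)
   argument so that the instance below may depend on it. *)
Definition completed of {measure set (n.-tuple R) -> \bar R} : Type := n.-tuple R.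
HB.instance Definition _ := Choice.copy (completed mu) (n.-tuple R).
HB.instance Definition _ := isPointed.Build (completed mu) (nseq_tuple n (0 : R)).

Lemma lmeasurable0 : lmeasurable mu set0.
Proof.
exists set0, set0; split; [exact: measurable0|exact: measurable0|exact: measure0|].
by rewrite set0D setU0.
Qed.

Lemma lmeasurableC (A : set (n.-tuple R)) : lmeasurable mu A -> lmeasurable mu (~` A).
Proof.
move=> [B [N [mB mN N0 AB]]]; exists (~` B), N; split => //; first exact: measurableC.
move=> x [[/= nAx nBx]|[/= nBx nAx]]; apply: AB.
  by right; split => //; apply: contra_notP nBx.
by left; split => //; apply: contra_notP nAx.
Qed.

Lemma lmeasurable_bigcup (F : (set (n.-tuple R))^nat) :
  (forall i, lmeasurable mu (F i)) -> lmeasurable mu (\bigcup_i F i).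
Proof.
move=> mF; have /choice[BN hBN] : forall i, exists BN : set (n.-tuple R) * set (n.-tuple R),
    [/\ measurable BN.1, measurable BN.2, mu BN.2 = 0 &
        (F i `\` BN.1) `|` (BN.1 `\` F i) `<=` BN.2].
  by move=> i; have [B [N hBN]] := mF i; exists (B, N).
have mN : measurable (\bigcup_i (BN i).2).
  by apply: bigcupT_measurable => i; case: (hBN i).
exists (\bigcup_i (BN i).1), (\bigcup_i (BN i).2); split => //.
- by apply: bigcupT_measurable => i; case: (hBN i).
- apply/(negligibleP _ mN); apply: negligible_bigcup => i.
  by case: (hBN i) => _ mNi Ni0 _; apply/negligibleP.
- move=> x [[[i _ Fix] nB]|[[i _ Bix] nF]]; exists i => //; case: (hBN i) => _ _ _; apply.
    by left; split => // Bix; apply: nB; exists i.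
  by right; split => // Fix; apply: nF; exists i.
Qed.

HB.instance Definition _ := @isMeasurable.Build default_measure_display
  (completed mu) (lmeasurable mu) lmeasurable0 lmeasurableC lmeasurable_bigcup.

Lemma measurable_lmeasurable (A : set (n.-tuple R)) : measurable A -> lmeasurable mu A.
Proof.
move=> mA; exists A, set0; split; [exact: mA|exact: measurable0|exact: measure0|].
by rewrite !setDv setU0.
Qed.

Lemma lmeasurable_inner (A : set (n.-tuple R)) : lmeasurable mu A ->
  exists B, [/\ measurable B, B `<=` A & mu.-negligible (A `\` B)].
Proof.
move=> [B [N [mB mN N0 AB]]]; exists (B `\` N); split; first exact: measurableD.
  move=> x [Bx nNx]; apply: contra_notP nNx => nAx; apply: AB.
  by right.
exists N; split => // x [Ax nB]; have [//|nNx] := pselect (N x).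
by apply: AB; left; split => // Bx; apply: nB.
Qed.

Lemma lmeas_funP (U : set (n.-tuple R)) d' (T' : measurableType d') (h : n.-tuple R -> T') :
  lmeasurable mu U ->
  lmeas_fun mu U h <-> measurable_fun (U : set (completed mu)) (h : completed mu -> T').
Proof. by move=> mU; split => [mh _ B mB|mh B mB]; exact: mh. Qed.

End completion.

Section tdist.
Variables (R : realType) (m : nat).
Implicit Types a b c : m.-tuple R.

Definition tdist a b : R := \big[Num.max/0]_(i < m) `|tnth a i - tnth b i|.

Lemma tdist_ge0 a b : 0 <= tdist a b.
Proof. by rewrite /tdist; elim/big_ind: _ => // x y; rewrite le_max => ->. Qed.

Lemma tdist_le a b i : `|tnth a i - tnth b i| <= tdist a b.
Proof. by rewrite /tdist (bigD1 i)//= le_max lexx. Qed.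

Lemma tdist_ltP a b e : 0 < e -> tdist a b < e <-> tclose a b e.
Proof.
move=> e0; split => [ab i|ab]; first exact: le_lt_trans (tdist_le a b i) ab.
exact: bigmax_lt.
Qed.

Lemma tdist_triangle a b c : tdist a c <= tdist a b + tdist b c.
Proof.
apply: bigmax_le => [|i _]; first by rewrite addr_ge0 ?tdist_ge0.
rewrite (le_trans _ (lerD (tdist_le a b i) (tdist_le b c i)))//.
by rewrite (le_trans _ (ler_normD _ _))// addrA subrK.
Qed.

Lemma tdistC a b : tdist a b = tdist b a.
Proof. by apply: eq_bigr => i _; rewrite distrC. Qed.

Lemma tdistxx a : tdist a a = 0.
Proof.
apply/eqP; rewrite eq_le tdist_ge0 andbT.
by apply: bigmax_le => // i _; rewrite subrr normr0.
Qed.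

Lemma measurable_tdist d (T : measurableType d) (D : set T) (f g : T -> m.-tuple R) :
  measurable_fun D f -> measurable_fun D g ->
  measurable_fun D (fun x => tdist (f x) (g x)).
Proof.
move=> mf mg; rewrite /tdist.
have mi i : measurable_fun D (fun x => `|tnth (f x) i - tnth (g x) i|).
  apply: measurableT_comp; first exact: normr_measurable.
  by apply: measurable_funB; apply: measurableT_comp (measurable_tnth i) _.
elim: (index_enum _) => [|i s ih].
  by under eq_fun do rewrite big_nil; exact: measurable_cst.
by under eq_fun do rewrite big_cons; exact: measurable_maxr.
Qed.

End tdist.

Section open_measurable.
Variables (R : realType) (n : nat).

Definition rat_ball (q : n.-tuple rat) (r : rat) : set (n.-tuple R) :=
  [set x | tdist x (map_tuple (@ratr R) q) < ratr r].

Lemma measurable_rat_ball q r : measurable (rat_ball q r).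
Proof.
have mt : measurable_fun setT (fun x : n.-tuple R => tdist x (map_tuple ratr q)).
  by apply: measurable_tdist => //; exact: measurable_cst.
rewrite (_ : rat_ball q r = setT `&` (fun x => tdist x (map_tuple ratr q)) @^-1` `]-oo, ratr r[).
  by apply: mt => //; exact: measurable_itv.
by apply/seteqP; split => x /=; rewrite in_itv/= => //; case.
Qed.

Lemma topen_rat_ball (U : set (n.-tuple R)) x : topen U -> U x ->
  exists q r, rat_ball q r x /\ rat_ball q r `<=` U.
Proof.
move=> oU Ux; have [e e0 eU] := oU x Ux.
have e4 : 0 < e / 4 by rewrite divr_gt0.
have qi i : exists q : rat, ratr q \in `](tnth x i - e / 4), (tnth x i + e / 4)[.
  by apply: rat_in_itvoo; rewrite ltrBlDr -addrA ltrDl addr_gt0.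
have [r] : exists r : rat, ratr r \in `](e / 4), (e / 2)[.
  by apply: rat_in_itvoo; rewrite ltr_pM2l// ltf_pV2 ?posrE//; lra.
rewrite in_itv/= => /andP[r1 r2].
pose q := [tuple xchoose (qi i) | i < n].
have xq : tdist (map_tuple ratr q) x < e / 4.
  rewrite tdistC; apply/tdist_ltP => // i; rewrite tnth_map tnth_mktuple.
  have := xchooseP (qi i); rewrite in_itv/= => /andP[q1 q2].
  rewrite ltr_norml; apply/andP; split; lra.
exists q, r; split; first by rewrite /rat_ball/= tdistC (lt_trans xq).
move=> y yq; apply: eU; apply/tdist_ltP => //; rewrite tdistC.
apply: le_lt_trans (tdist_triangle y (map_tuple ratr q) x) _.
by apply: (lt_le_trans (ltrD (lt_trans yq r2) xq)); lra.
Qed.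

Lemma topen_measurable (U : set (n.-tuple R)) : topen U -> measurable U.
Proof.
move=> oU; pose S k := if unpickle k is Some (q, r) then
  if `[< rat_ball q r `<=` U >] then rat_ball q r else set0 else set0.
have -> : U = \bigcup_k S k.
  apply/seteqP; split => [x Ux|x [k _]]; last first.
    by rewrite /S; case: (unpickle k) => [[q r]|//]; case: ifPn => // /asboolP; apply.
  have [q [r [qrx qrU]]] := topen_rat_ball oU Ux.
  by exists (pickle (q, r)) => //; rewrite /S pickleK ifT//; apply/asboolP.
apply: bigcupT_measurable => k; rewrite /S.
case: (unpickle k) => [[q r]|//]; case: ifPn => // _; exact: measurable_rat_ball.
Qed.

End open_measurable.

Lemma ess_sup_on_lt_ae (R : realType) n (mu : {measure set (n.-tuple R) -> \bar R})
    (U : set (n.-tuple R)) (F : n.-tuple R -> \bar R) (y : \bar R) :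
  (ess_sup_on mu U F < y)%E -> \forall x \ae mu, U x -> (F x < y)%E.
Proof.
by move=> /ereal_inf_lt [z Fz zy]; apply: filterS Fz => x Fxz Ux; exact: le_lt_trans (Fxz Ux) zy.
Qed.

Section subseq_dist.
Variables (R : realType) (n m : nat) (u : nat -> n.-tuple R -> m.-tuple R) (J : pred nat).

Definition trunc_dist k x (xi : m.-tuple R) : R :=
  if J k then Num.min 1 (tdist xi (u k x)) else 1.

Definition subseq_dist x xi : R := infs (fun k => trunc_dist k x xi) 0.

Lemma trunc_dist_itv k x xi : 0 <= trunc_dist k x xi <= 1.
Proof.
rewrite /trunc_dist; case: (J k); last by rewrite ler01 lexx.
by rewrite ge_min lexx le_min ler01 tdist_ge0.
Qed.

Let trunc_dist_lbound x xi (K : set nat) :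
  has_lbound [set trunc_dist k x xi | k in K].
Proof. by exists 0 => _ [k _ <-]; case/andP: (trunc_dist_itv k x xi). Qed.

Lemma subseq_dist_ge0 x xi : 0 <= subseq_dist x xi.
Proof.
apply: lb_le_inf; first by exists (trunc_dist 0 x xi), 0%N.
by move=> _ [k _ <-]; case/andP: (trunc_dist_itv k x xi).
Qed.

Lemma subseq_dist_le x xi k : subseq_dist x xi <= trunc_dist k x xi.
Proof. by apply: ge_inf; [exact: trunc_dist_lbound | exists k]. Qed.

Lemma subseq_dist_le1 x xi : subseq_dist x xi <= 1.
Proof. by apply: le_trans (subseq_dist_le x xi 0) _; case/andP: (trunc_dist_itv 0 x xi). Qed.

Lemma subseq_dist_u x k : J k -> subseq_dist x (u k x) = 0.
Proof.
move=> Jk; apply/eqP; rewrite eq_le subseq_dist_ge0 andbT.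
by rewrite (le_trans (subseq_dist_le _ _ k))// /trunc_dist Jk tdistxx ge_min lexx orbT.
Qed.

Lemma subseq_dist_lipschitz x a b : subseq_dist x a <= subseq_dist x b + tdist a b.
Proof.
rewrite -lerBlDr; apply: lb_le_inf; first by exists (trunc_dist 0 x b), 0%N.
move=> _ [k _ <-]; rewrite lerBlDr (le_trans (subseq_dist_le x a k))//.
rewrite /trunc_dist; case: (J k); last by rewrite lerDl tdist_ge0.
have := tdist_triangle a b (u k x); have := tdist_ge0 a b.
rewrite /Num.min; case: ifPn; case: ifPn; rewrite -?leNgt; lra.
Qed.

Lemma subseq_dist_continuous x : tcontinuous (subseq_dist x).
Proof.
move=> xi e e0; exists e => // eta /(tdist_ltP _ _ e0) xi_eta.
apply: le_lt_trans xi_eta.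
have := subseq_dist_lipschitz x xi eta; have := subseq_dist_lipschitz x eta xi.
rewrite (tdistC eta) => h1 h2; rewrite ler_norml; apply/andP; split; lra.
Qed.

Lemma subseq_dist_eq0 x xi d : subseq_dist x xi = 0 -> 0 < d ->
  exists2 k, J k & tclose xi (u k x) d.
Proof.
move=> g0 d0; have : subseq_dist x xi < Num.min d 1 by rewrite g0 lt_min d0 ltr01.
move=> /(inf_lt _) [|_ [k _ <-]]; first by exists (trunc_dist 0 x xi), 0%N.
rewrite /trunc_dist; case: ifPn => [Jk|_]; last by rewrite lt_min ltxx andbF.
rewrite lt_min !gt_min ltxx /= => /andP[k_d k_1]; exists k => //.
by apply/tdist_ltP => //; case/orP: k_d => // /(lt_trans k_1).
Qed.

Lemma measurable_subseq_dist d (T : measurableType d) (D : set T)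
    (X : T -> n.-tuple R) (Xi : T -> m.-tuple R) :
  (forall k, measurable_fun D (fun t => u k (X t))) -> measurable_fun D Xi ->
  measurable_fun D (fun t => subseq_dist (X t) (Xi t)).
Proof.
move=> muX mXi; apply: measurable_fun_infs => [t _|k]; first exact: trunc_dist_lbound.
rewrite /trunc_dist; case: (J k); last exact: measurable_cst.
by apply: measurable_minr; [exact: measurable_cst|exact: measurable_tdist].
Qed.

Lemma nu_ess_sup_le_subseq_dist (P : probability (m.-tuple R) R) (F : m.-tuple R -> R) x t :
  tlsc F -> (forall k, J k -> F (u k x) <= t) ->
  (\int[P]_xi (subseq_dist x xi)%:E = 0)%E -> (nu_ess_sup P F <= t%:E)%E.
Proof.
move=> Flsc Ft int0; apply: ereal_inf_lbound => /=.
have mg : measurable_fun setT (fun xi => (subseq_dist x xi)%:E).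
  apply/measurable_EFinP; apply: (measurable_subseq_dist (X := fun=> x)) => [k|].
    exact: measurable_cst.
  exact: measurable_id.
have /(ae_eq_integral_abs P measurableT mg).1 : (\int[P]_xi `|(subseq_dist x xi)%:E| = 0)%E.
  by rewrite -int0; apply: eq_integral => xi _; rewrite gee0_abs// lee_fin subseq_dist_ge0.
apply: filterS => xi /(_ I) [g0]; rewrite lee_fin leNgt; apply/negP => tF.
have [d d0 dF] := Flsc xi t tF; have [k Jk /dF] := subseq_dist_eq0 g0 d0.
by rewrite ltNge Ft.
Qed.

End subseq_dist.

Section young_measure.
Variables (R : realType) (n m : nat) (mu : {measure set (n.-tuple R) -> \bar R}).
Variables (U : set (n.-tuple R)) (u : nat -> n.-tuple R -> m.-tuple R).
Variable nu : n.-tuple R -> probability (m.-tuple R) R.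
Hypotheses (mU : measurable U) (muU : (mu U < +oo)%E).

Let lmU : lmeasurable mu U := measurable_lmeasurable mu mU.

Section subseq_dist_caratheodory.
Hypothesis u_meas : forall k, lmeas_fun mu U (u k).
Variable J : pred nat.

Lemma lmeas_fun_subseq_dist (v : n.-tuple R -> m.-tuple R) :
  lmeas_fun mu U v -> lmeas_fun mu U (fun x => subseq_dist u J x (v x)).
Proof.
move=> /(lmeas_funP _ lmU) mv; apply/(lmeas_funP _ lmU).
by apply: (measurable_subseq_dist J _ mv) => k; apply/(lmeas_funP _ lmU).
Qed.

Lemma caratheodory_subseq_dist : caratheodory mu U (subseq_dist u J).
Proof.
split => [xi|]; last by apply: aeW => x _; exact: subseq_dist_continuous.
by apply: lmeas_fun_subseq_dist; apply/(lmeas_funP _ lmU); exact: measurable_cst.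
Qed.

End subseq_dist_caratheodory.

(* Testing the weak L^1 convergence of [g(., u_k)] against the constant 1. *)
Lemma young_integral_eq0_ae (g : n.-tuple R -> m.-tuple R -> R) :
  generates_young mu U u nu -> caratheodory mu U g ->
  (forall x xi, 0 <= g x xi <= 1) ->
  (forall k, lmeas_fun mu U (fun x => g x (u k x))) ->
  (forall N, exists2 k, (N <= k)%N & forall x, U x -> g x (u k x) = 0) ->
  \forall x \ae mu, U x -> (\int[nu x]_xi (g x xi)%:E = 0)%E.
Proof.
move=> [_ _ young] g_car g01 gu_meas gu_freq0.
have int_le_measure E k : measurable E -> (\int[mu]_(x in E) `|g x (u k x)|%:E <= mu E)%E.
  move=> mE; rewrite -[mu E]mul1e -integral_cst//.
  apply: ge0_le_integral_patch => [x _|x _|x]; rewrite ?lee_fin//.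
  rewrite /patch; case: ifPn => // _; rewrite lee_fin ger0_norm.
    by case/andP: (g01 x (u k x)).
  by case/andP: (g01 x (u k x)).
have L1 : L1_bounded mu U (fun k x => g x (u k x)).
  split => //; exists (fine (mu U)) => k.
  by rewrite fineK ?ge0_fin_numE//; exact: int_le_measure.
have ei : equi_integrable mu U (fun k x => g x (u k x)).
  by move=> e e0; exists e => // E mE _ muE k; apply: le_lt_trans muE; exact: int_le_measure.
have [G_meas [_ G_cvg]] := young g g_car L1 ei.
have one_meas : lmeas_fun mu U (cst 1 : n.-tuple R -> R).
  by apply/(lmeas_funP _ lmU); exact: measurable_cst.
have one_bounded : exists C : R, \forall x \ae mu, U x -> `|(cst 1 : _ -> R) x| <= C.
  by exists 1; apply: aeW => x _; rewrite normr1.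
have gu_int0 N : exists2 k, (N <= k)%N &
    (\int[mu]_(x in U) ((g x (u k x))%:E * (cst 1 x)%:E) = 0)%E.
  have [k Nk gu0] := gu_freq0 N; exists k => //.
  by rewrite integral0_eq// => x Ux; rewrite gu0// mul0e.
have G_int0 := cvg_frequently_eq gu_int0 (G_cvg _ one_meas one_bounded).
apply: ge0_integral_eq0_ae => [x _||].
- by apply: integral_ge0 => xi _; rewrite lee_fin; case/andP: (g01 x xi).
- by rewrite -G_int0; apply: eq_integral => x _; rewrite mule1.
- move=> c c0; apply: lmeasurable_inner.
  rewrite (_ : _ `&` _ = U `&` (fun x => \int[nu x]_xi (g x xi)%:E)%E @^-1` `]c%:E, +oo%E]%classic).
    exact: G_meas (emeasurable_itv _).
  by apply/seteqP; split => x [Ux]; rewrite /= in_itv/= ?leey ?andbT.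
Qed.

End young_measure.

Theorem mainTheorem18 (R : realType) (n m : nat)
    (mu : {measure set (n.-tuple R) -> \bar R})
    (U : set (n.-tuple R))
    (f : n.-tuple R -> m.-tuple R -> R)
    (u : nat -> n.-tuple R -> m.-tuple R)
    (nu : n.-tuple R -> probability (m.-tuple R) R) :
  is_lebesgue mu ->
  topen U ->
  (mu U < +oo)%E ->
  normal_integrand mu U f ->
  (exists c : R, forall x xi, U x -> c <= f x xi) ->
  Linf_bounded mu U u ->
  generates_young mu U u nu ->
  (ess_sup_on mu U (fun x => nu_ess_sup (nu x) (f x))
   <= limn_einf (fun k => ess_sup_on mu U (fun x => (f x (u k x))%:E)))%E.
Proof.
move=> _ /topen_measurable mU muU [_ f_lsc] _ [u_meas _] young.
apply: lee_fin_gt => t /limn_einf_lt_frequently s_freq.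
pose J k := (ess_sup_on mu U (fun x => (f x (u k x))%:E) < t%:E)%E.
pose g := subseq_dist u J.
have f_le_t : \forall x \ae mu, U x -> forall k, J k -> f x (u k x) <= t.
  have fk k : \forall x \ae mu, U x -> J k -> f x (u k x) <= t.
    case Jk : (J k); last by apply: aeW.
    by apply: filterS (ess_sup_on_lt_ae Jk) => x /[apply] /ltW; rewrite lee_fin.
  by apply: filterS (ae_foralln fk) => x fx Ux k; exact: fx.
have g_int0 : \forall x \ae mu, U x -> (\int[nu x]_xi (g x xi)%:E = 0)%E.
  apply: young_integral_eq0_ae young _ _ _ _ => //.
  - exact: caratheodory_subseq_dist.
  - by move=> x xi; rewrite subseq_dist_ge0 subseq_dist_le1.
  - by move=> k; apply: lmeas_fun_subseq_dist.
  - by move=> N; have [k Nk Jk] := s_freq N; exists k => // x _; exact: subseq_dist_u.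
apply: ereal_inf_lbound; apply: filterS3 f_lsc f_le_t g_int0 => x lsc fu_le g0 Ux.
exact: nu_ess_sup_le_subseq_dist (lsc Ux) (fu_le Ux) (g0 Ux).
Qed.
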